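(* Let $\mathcal{LS}_{\mathfrak{A}_1}\langle X\rangle$ be the free algebra over a field of characteristic $0$ in the variety of left-symmetric algebras satisfying $(ab)c+(ba)c+(ac)b+(ca)b+(bc)a+(cb)a=0$, and equip it with the commutator $[a,b]=ab-ba$. Then every polynomial identity of degree at most $4$ satisfied by $(\mathcal{LS}_{\mathfrak{A}_1}\langle X\rangle,[\cdot,\cdot])$ is a consequence of anticommutativity and the Jacobi identity.
   Context: A left-symmetric algebra is an algebra with $(a,b,c)=(b,a,c)$, where $(a,b,c)=(ab)c-a(bc)$. *)

From HB Require Import structures.
From mathcomp Require Import all_boot all_order all_algebra.
Set Implicit Arguments. Unset Strict Implicit. Unset Printing Implicit Defensive.
Import GRing.Theory.
Local Open Scope ring_scope.

(* Nonassociative polynomials in the countably many variables x_0, x_1, ...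
   over a coefficient type K, written as formal expressions.  Elements of the
   free (nonassociative) algebra, and of free algebras of varieties, are
   these expressions taken modulo the congruences [tcong] below. *)
Inductive term (K : Type) : Type :=
| Var of nat
| Zero
| Add of term K & term K
| Scal of K & term K
| Mul of term K & term K.
Arguments Var {K}. Arguments Zero {K}.

Fixpoint subst (K : Type) (s : nat -> term K) (t : term K) : term K :=
  match t with
  | Var n => s n
  | Zero => Zero
  | Add a b => Add (subst s a) (subst s b)
  | Scal c a => Scal c (subst s a)
  | Mul a b => Mul (subst s a) (subst s b)
  end.

(* Syntactic degree: a polynomial has degree <= d iff it is represented by a
   term of syntactic degree <= d. *)
Fixpoint tdeg (K : Type) (t : term K) : nat :=
  match t with
  | Var _ => 1
  | Zero => 0
  | Add a b => maxn (tdeg a) (tdeg b)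
  | Scal _ a => tdeg a
  | Mul a b => (tdeg a + tdeg b)%N
  end.

(* Terms modulo
   [tcong I] form the free algebra (on countably many generators) of the
   variety defined by I; [tcong I f Zero] says f lies in the T-ideal
   generated by I, i.e. f is a consequence of the identities I. *)
Inductive tcong (K : fieldType) (I : term K -> Prop) : term K -> term K -> Prop :=
| tc_refl a : tcong I a a
| tc_sym a b : tcong I a b -> tcong I b a
| tc_trans a b c : tcong I a b -> tcong I b c -> tcong I a c
| tc_add a a' b b' : tcong I a a' -> tcong I b b' -> tcong I (Add a b) (Add a' b')
| tc_scal k a a' : tcong I a a' -> tcong I (Scal k a) (Scal k a')
| tc_mul a a' b b' : tcong I a a' -> tcong I b b' -> tcong I (Mul a b) (Mul a' b')
| tc_addA a b c : tcong I (Add a (Add b c)) (Add (Add a b) c)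
| tc_addC a b : tcong I (Add a b) (Add b a)
| tc_add0 a : tcong I (Add Zero a) a
| tc_addN a : tcong I (Add a (Scal (-1) a)) Zero
| tc_scal1 a : tcong I (Scal 1 a) a
| tc_scalA k l a : tcong I (Scal k (Scal l a)) (Scal (k * l) a)
| tc_scalDr k a b : tcong I (Scal k (Add a b)) (Add (Scal k a) (Scal k b))
| tc_scalDl k l a : tcong I (Scal (k + l) a) (Add (Scal k a) (Scal l a))
| tc_mulDl a b c : tcong I (Mul (Add a b) c) (Add (Mul a c) (Mul b c))
| tc_mulDr a b c : tcong I (Mul a (Add b c)) (Add (Mul a b) (Mul a c))
| tc_mulZl k a b : tcong I (Mul (Scal k a) b) (Scal k (Mul a b))
| tc_mulZr k a b : tcong I (Mul a (Scal k b)) (Scal k (Mul a b))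
| tc_ident p s : I p -> tcong I (subst s p) Zero.

Definition Sub (K : fieldType) (a b : term K) : term K := Add a (Scal (-1) b).

Fixpoint evalC (K : fieldType) (s : nat -> term K) (t : term K) : term K :=
  match t with
  | Var n => s n
  | Zero => Zero
  | Add a b => Add (evalC s a) (evalC s b)
  | Scal c a => Scal c (evalC s a)
  | Mul a b => let a' := evalC s a in let b' := evalC s b in
               Sub (Mul a' b') (Mul b' a')
  end.

Definition x0 {K : Type} : term K := Var 0.
Definition x1 {K : Type} : term K := Var 1.
Definition x2 {K : Type} : term K := Var 2.

Definition assoc (K : fieldType) (a b c : term K) : term K :=
  Sub (Mul (Mul a b) c) (Mul a (Mul b c)).

Definition LS_A1_ids (K : fieldType) (p : term K) : Prop :=
  p = Sub (assoc x0 x1 x2) (assoc x1 x0 x2) \/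
  p = Add (Mul (Mul x0 x1) x2) (Add (Mul (Mul x1 x0) x2)
      (Add (Mul (Mul x0 x2) x1) (Add (Mul (Mul x2 x0) x1)
      (Add (Mul (Mul x1 x2) x0) (Mul (Mul x2 x1) x0))))).

Definition Lie_ids (K : fieldType) (p : term K) : Prop :=
  p = Mul x0 x0 \/
  p = Add (Mul (Mul x0 x1) x2) (Add (Mul (Mul x1 x2) x0) (Mul (Mul x2 x0) x1)).

Definition comm_identity_LS_A1 (K : fieldType) (f : term K) : Prop :=
  forall s : nat -> term K, tcong (@LS_A1_ids K) (evalC s f) Zero.

(* Write alpha(f) for the expansion of f in the free associative algebra,
   the product being read as the commutator ab - ba.

   Over a field of characteristic 0, a term f with alpha(f) = 0 is a
   consequence of the Lie identities, in any degree.  Modulo the Lie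
   identities, Dynkin's lemma identifies the left-normed bracketing of
   alpha(g) with D g, where the Euler derivation D multiplies the homogeneous
   component of degree n by n.  Hence D^j f = 0 for every j >= 1, and a
   Vandermonde argument on the homogeneous components of f gives f = 0.

   Conversely, an identity f of degree at most 4 of the commutator algebra of
   LS_A1<X> has alpha(f) = 0.  In a left-symmetric algebra the left
   multiplications satisfy L_(ab - ba) = [L_a, L_b], so L_(f(v)) is alpha(f)
   evaluated at the L_(v_x).  A 31-dimensional algebra of the variety (its
   identities are checked by computation on the structure constants) contains
   a chain m_4, ..., m_0 with e_q m_(q+1) = 4 m_q and e_q m_j = 0 for
   j <> q + 1.  Substituting for each variable x the sum of the e_q with
   u_q = x, the m_0-coordinate of L_(f(v)) m_k is 4^k times the coefficient
   of the word u of length k in alpha(f). *)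

From HB Require Import structures.
From mathcomp Require Import all_boot all_order all_algebra.
From mathcomp Require boolp.
From mathcomp Require Import ring.
From Stdlib Require Import ClassicalEpsilon ProofIrrelevance.
From Stdlib Require Import FunctionalExtensionality PropExtensionality.

Set Implicit Arguments. Unset Strict Implicit. Unset Printing Implicit Defensive.
Import GRing.Theory.
Local Open Scope ring_scope.

(** * Free algebras of varieties *)

Section TermQuotient.
Variables (K : fieldType) (I : term K -> Prop).
Local Notation tc := (tcong I).

Definition tcanon (t : term K) : term K := epsilon (inhabits Zero) (tc^~ t).

Lemma tcanonP t : tc (tcanon t) t.
Proof. by apply: (epsilon_spec (inhabits Zero) (tc^~ t)); exists t; apply: tc_refl. Qed.

Lemma tcanon_eq t t' : tc t t' -> tcanon t = tcanon t'.
Proof.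
move=> tt'; rewrite /tcanon; congr epsilon.
apply: functional_extensionality => s; apply: propositional_extensionality.
by split=> st; [apply: tc_trans st tt' | apply: tc_trans st (tc_sym tt')].
Qed.

Lemma tcanon_idem t : tcanon (tcanon t) = tcanon t.
Proof. exact/tcanon_eq/tcanonP. Qed.

Record tquot := TQuot { tqval : term K; _ : tcanon tqval = tqval }.

Definition tpi (t : term K) : tquot := TQuot (tcanon_idem t).

Lemma tqval_inj : injective tqval.
Proof. by case=> a pa [b pb] /= eab; subst b; congr TQuot; apply: proof_irrelevance. Qed.

Lemma tqvalK x : tpi (tqval x) = x.
Proof. by apply: tqval_inj; case: x. Qed.

Lemma tpiK t : tc (tqval (tpi t)) t.
Proof. exact: tcanonP. Qed.

Lemma eq_tpi t t' : tc t t' -> tpi t = tpi t'.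
Proof. by move=> tt'; apply: tqval_inj; apply: tcanon_eq. Qed.

Lemma tpi_tcong t t' : tpi t = tpi t' -> tc t t'.
Proof.
move=> /(congr1 tqval) /= e.
by apply: tc_trans (tc_sym (tcanonP t)) _; rewrite e; apply: tcanonP.
Qed.

Lemma tquot_ind (P : tquot -> Prop) : (forall t, P (tpi t)) -> forall x, P x.
Proof. by move=> Ppi x; rewrite -(tqvalK x). Qed.

HB.instance Definition _ := boolp.gen_eqMixin tquot.
HB.instance Definition _ := boolp.gen_choiceMixin tquot.

Definition tq_add x y := tpi (Add (tqval x) (tqval y)).
Definition tq_opp x := tpi (Scal (-1) (tqval x)).
Definition tq_scale k x := tpi (Scal k (tqval x)).
Definition tqmul x y := tpi (Mul (tqval x) (tqval y)).

Lemma tpi_add a b : tpi (Add a b) = tq_add (tpi a) (tpi b).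
Proof. by apply: eq_tpi; apply: tc_add; apply: tc_sym; apply: tpiK. Qed.

Lemma tpi_scale k a : tpi (Scal k a) = tq_scale k (tpi a).
Proof. by apply: eq_tpi; apply: tc_scal; apply: tc_sym; apply: tpiK. Qed.

Lemma tpiM a b : tpi (Mul a b) = tqmul (tpi a) (tpi b).
Proof. by apply: eq_tpi; apply: tc_mul; apply: tc_sym; apply: tpiK. Qed.

Lemma tq_addA : associative tq_add.
Proof.
by elim/tquot_ind=> a; elim/tquot_ind=> b; elim/tquot_ind=> c;
  rewrite -!tpi_add; apply/eq_tpi/tc_addA.
Qed.

Lemma tq_addC : commutative tq_add.
Proof. by elim/tquot_ind=> a; elim/tquot_ind=> b; rewrite -!tpi_add; apply/eq_tpi/tc_addC. Qed.

Lemma tq_add0 : left_id (tpi Zero) tq_add.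
Proof. by elim/tquot_ind=> a; rewrite -tpi_add; apply/eq_tpi/tc_add0. Qed.

Lemma tq_addN : left_inverse (tpi Zero) tq_opp tq_add.
Proof.
elim/tquot_ind=> a; rewrite /tq_opp -tpi_add; apply: eq_tpi.
apply: tc_trans (tc_addC I _ _) (tc_trans _ (tc_addN I a)).
exact/tc_add/tc_scal/tpiK/tc_refl.
Qed.

HB.instance Definition _ := GRing.isZmodule.Build tquot tq_addA tq_addC tq_add0 tq_addN.

Lemma tpiD a b : tpi (Add a b) = tpi a + tpi b. Proof. exact: tpi_add. Qed.
Lemma tpi0 : tpi Zero = 0. Proof. by []. Qed.

Lemma tq_scaleA a b x : tq_scale a (tq_scale b x) = tq_scale (a * b) x.
Proof. by elim/tquot_ind: x => x; rewrite -!tpi_scale; apply/eq_tpi/tc_scalA. Qed.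

Lemma tq_scale1 : left_id 1 tq_scale.
Proof. by elim/tquot_ind=> x; rewrite -tpi_scale; apply/eq_tpi/tc_scal1. Qed.

Lemma tq_scaleDr : right_distributive tq_scale +%R.
Proof.
move=> k; elim/tquot_ind=> a; elim/tquot_ind=> b.
by rewrite -tpiD -!tpi_scale -tpiD; apply/eq_tpi/tc_scalDr.
Qed.

Lemma tq_scaleDl x : {morph tq_scale^~ x : a b / a + b}.
Proof.
by elim/tquot_ind: x => x a b; rewrite -!tpi_scale -tpiD; apply/eq_tpi/tc_scalDl.
Qed.

HB.instance Definition _ :=
  GRing.Zmodule_isLmodule.Build K tquot tq_scaleA tq_scale1 tq_scaleDr tq_scaleDl.

Lemma tpiZ k a : tpi (Scal k a) = k *: tpi a. Proof. exact: tpi_scale. Qed.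

Lemma tqmulDl : left_distributive tqmul +%R.
Proof.
elim/tquot_ind=> a; elim/tquot_ind=> b; elim/tquot_ind=> c.
by rewrite -tpiD -!tpiM -tpiD; apply/eq_tpi/tc_mulDl.
Qed.

Lemma tqmulDr : right_distributive tqmul +%R.
Proof.
elim/tquot_ind=> a; elim/tquot_ind=> b; elim/tquot_ind=> c.
by rewrite -tpiD -!tpiM -tpiD; apply/eq_tpi/tc_mulDr.
Qed.

Lemma tqmulZl k x y : tqmul (k *: x) y = k *: tqmul x y.
Proof.
elim/tquot_ind: x => a; elim/tquot_ind: y => b.
by rewrite -tpiZ -!tpiM -tpiZ; apply/eq_tpi/tc_mulZl.
Qed.

Lemma tqmulZr k x y : tqmul x (k *: y) = k *: tqmul x y.
Proof.
elim/tquot_ind: x => a; elim/tquot_ind: y => b.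
by rewrite -tpiZ -!tpiM -tpiZ; apply/eq_tpi/tc_mulZr.
Qed.

Lemma tqmul0l y : tqmul 0 y = 0.
Proof. by rewrite -(scale0r 0) tqmulZl !scale0r. Qed.

Lemma tqmul0r x : tqmul x 0 = 0.
Proof. by rewrite -(scale0r 0) tqmulZr !scale0r. Qed.

Lemma tqmulNl x y : tqmul (- x) y = - tqmul x y.
Proof. by rewrite -scaleN1r tqmulZl scaleN1r. Qed.

Lemma tqmul_sumr (J : Type) (r : seq J) (F : J -> tquot) x :
  tqmul x (\sum_(i <- r) F i) = \sum_(i <- r) tqmul x (F i).
Proof. by elim: r => [|i r IH]; rewrite ?big_nil ?tqmul0r // !big_cons tqmulDr IH. Qed.

End TermQuotient.

Section LinearCombination.
Variables (T : eqType) (R : nzRingType) (V : lmodType R).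
Implicit Types (L : seq (T * R)) (F : T -> V).

Definition coef L (x : T) : R := \sum_(p <- L) (p.1 == x)%:R * p.2.

Definition lcomb F L : V := \sum_(p <- L) p.2 *: F p.1.

Lemma coef_cat L1 L2 x : coef (L1 ++ L2) x = coef L1 x + coef L2 x.
Proof. by rewrite /coef big_cat. Qed.

Lemma lcomb_cat F L1 L2 : lcomb F (L1 ++ L2) = lcomb F L1 + lcomb F L2.
Proof. by rewrite /lcomb big_cat. Qed.

Lemma lcomb_coef F L (W : seq T) : uniq W -> {subset map fst L <= W} ->
  lcomb F L = \sum_(x <- W) coef L x *: F x.
Proof.
move=> uW LW; rewrite /lcomb; under [RHS]eq_bigr do rewrite scaler_suml.
rewrite exchange_big /= big_seq [RHS]big_seq; apply: eq_bigr => p pL.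
have pW : p.1 \in W by apply/LW/map_f.
rewrite (big_rem _ pW) /= eqxx mul1r big1_seq ?addr0 // => x /andP[_ xW].
have /negPf-> : p.1 != x by apply: contraTneq xW => <-; rewrite mem_rem_uniqF.
by rewrite mul0r scale0r.
Qed.

Lemma lcomb_coef0 F L : {in map fst L, forall x, coef L x = 0} -> lcomb F L = 0.
Proof.
move=> L0; rewrite (@lcomb_coef F L (undup (map fst L))) ?undup_uniq //; last first.
  by move=> x; rewrite mem_undup.
by rewrite big1_seq // => x /andP[_]; rewrite mem_undup => /L0->; rewrite scale0r.
Qed.

Lemma eq_lcomb_coef F L L' : coef L =1 coef L' -> lcomb F L = lcomb F L'.
Proof.
move=> LL'; pose W := undup (map fst (L ++ L')).
have [LW L'W] : {subset map fst L <= W} /\ {subset map fst L' <= W}.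
  by split=> x xL; rewrite mem_undup map_cat mem_cat xL ?orbT.
rewrite (lcomb_coef F (undup_uniq _) LW) (lcomb_coef F (undup_uniq _) L'W).
by apply: eq_bigr => x _; rewrite LL'.
Qed.

End LinearCombination.

Lemma coef_lcomb (T : eqType) (R : comNzRingType) (L : seq (T * R)) x :
  coef L x = lcomb (fun y => (y == x)%:R : R^o) L.
Proof. by apply: eq_bigr => p _; rewrite mulrC. Qed.

Lemma coef_rmorph (T : eqType) (R S : nzRingType) (f : {rmorphism R -> S})
    (L : seq (T * R)) x :
  coef [seq (p.1, f p.2) | p <- L] x = f (coef L x).
Proof.
by rewrite /coef big_map rmorph_sum; apply: eq_bigr => p _; rewrite rmorphM rmorph_nat.
Qed.

Lemma linear_lcomb (T : eqType) (R : nzRingType) (U V : lmodType R)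
    (f : {linear U -> V}) (G : T -> U) L :
  f (lcomb G L) = lcomb (f \o G) L.
Proof. by rewrite /lcomb linear_sum; apply: eq_bigr => p _; rewrite linearZ. Qed.

Lemma exchange_lcomb (T T' : eqType) (R : comNzRingType) (V : lmodType R)
    (G : T -> T' -> V) L1 L2 :
  lcomb (fun u => lcomb (G u) L2) L1 = lcomb (fun v => lcomb (G^~ v) L1) L2.
Proof.
rewrite /lcomb; under eq_bigr do rewrite scaler_sumr.
rewrite exchange_big; apply: eq_bigr => q _; rewrite scaler_sumr.
by apply: eq_bigr => p _; rewrite !scalerA mulrC.
Qed.

Notation word := (seq nat).

Section WordPolynomials.
Variable K : fieldType.
Implicit Types (L : seq (word * K)) (u w : word).

Definition wmul L1 L2 : seq (word * K) :=
  [seq (p.1 ++ q.1, p.2 * q.2) | p <- L1, q <- L2].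

Definition wscale (c : K) L : seq (word * K) := [seq (p.1, c * p.2) | p <- L].

Lemma coef_wscale c L w : coef (wscale c L) w = c * coef L w.
Proof. by rewrite /coef big_map mulr_sumr; apply: eq_bigr => p _; rewrite mulrCA. Qed.

Lemma lcomb_wscale (V : lmodType K) (F : word -> V) c L :
  lcomb F (wscale c L) = c *: lcomb F L.
Proof. by rewrite /lcomb big_map scaler_sumr; apply: eq_bigr => p _; rewrite scalerA. Qed.

Lemma lcomb_wmul (V : lmodType K) (F : word -> V) L1 L2 :
  lcomb F (wmul L1 L2) = lcomb (fun u => lcomb (fun v => F (u ++ v)) L2) L1.
Proof.
rewrite /lcomb big_allpairs_dep; apply: eq_bigr => p _.
by rewrite scaler_sumr; apply: eq_bigr => q _; rewrite scalerA.
Qed.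

Lemma coef_wmul L1 L2 w :
  coef (wmul L1 L2) w = lcomb (fun u => lcomb (fun v => (u ++ v == w)%:R : K^o) L2) L1.
Proof. by rewrite coef_lcomb lcomb_wmul. Qed.

Lemma eq_coef_wmull L1 L1' L2 : coef L1 =1 coef L1' -> coef (wmul L1 L2) =1 coef (wmul L1' L2).
Proof.
move=> E w; rewrite !coef_wmul.
exact: (eq_lcomb_coef (fun u => lcomb (fun v => (u ++ v == w)%:R : K^o) L2) E).
Qed.

Lemma eq_coef_wmulr L1 L2 L2' : coef L2 =1 coef L2' -> coef (wmul L1 L2) =1 coef (wmul L1 L2').
Proof.
move=> E w; rewrite !coef_wmul !(exchange_lcomb (fun u v => (u ++ v == w)%:R : K^o)).
exact: (eq_lcomb_coef (fun v => lcomb (fun u => (u ++ v == w)%:R : K^o) L1) E).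
Qed.

Fixpoint comm_expand (t : term K) : seq (word * K) :=
  match t with
  | Var x => [:: ([:: x], 1)]
  | Zero => [::]
  | Add a b => comm_expand a ++ comm_expand b
  | Scal c a => wscale c (comm_expand a)
  | Mul a b => wmul (comm_expand a) (comm_expand b) ++
               wscale (-1) (wmul (comm_expand b) (comm_expand a))
  end.

Lemma comm_expand_size t p : p \in comm_expand t -> (0 < size p.1 <= tdeg t)%N.
Proof.
elim: t p => [x||a iha b ihb|c a iha|a iha b ihb] p /=.
- by rewrite inE => /eqP ->.
- by [].
- rewrite mem_cat => /orP[/iha|/ihb] /andP[-> h] /=; apply: (leq_trans h);
  by rewrite ?leq_maxl ?leq_maxr.
- by case/mapP => q /iha h ->.
- rewrite mem_cat => /orP[/allpairsP[[q r] /= [qL rL ->]]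
                          |/mapP[p' /allpairsP[[q r] /= [qL rL ->]] ->]] /=;
  rewrite size_cat addn_gt0.
  + by case/andP: (iha _ qL) => -> ?; case/andP: (ihb _ rL) => _ ?; rewrite leq_add.
  + case/andP: (ihb _ qL) => -> ?; case/andP: (iha _ rL) => _ ?.
    by rewrite addnC leq_add.
Qed.

End WordPolynomials.

Section WordActions.
Variables (K : fieldType) (I : term K -> Prop).
Local Notation Q := (tquot I).
Local Notation tpi := (tpi I).

Definition rmulw (w : word) (x : Q) : Q := foldl (fun y i => tqmul y (tpi (Var i))) x w.

Definition lbracket (w : word) : Q := if w is i :: w' then rmulw w' (tpi (Var i)) else 0.

Lemma rmulw_is_linear w : linear (rmulw w).
Proof.
move=> k x y; elim: w x y => [|i w IH] x y //=.
by rewrite tqmulDl tqmulZl IH.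
Qed.
HB.instance Definition _ w :=
  GRing.isLinear.Build K Q Q *:%R (rmulw w) (rmulw_is_linear w).

Lemma rmulw_cat u v x : rmulw (u ++ v) x = rmulw v (rmulw u x).
Proof. by rewrite /rmulw foldl_cat. Qed.

Lemma lbracket_cat u v : (0 < size u)%N -> lbracket (u ++ v) = rmulw v (lbracket u).
Proof. by case: u => [|i u] //= _; rewrite rmulw_cat. Qed.

Lemma lcomb_rmulw_wmul x L1 L2 :
  lcomb (rmulw^~ x) (wmul L1 L2) = lcomb (rmulw^~ (lcomb (rmulw^~ x) L1)) L2.
Proof.
rewrite lcomb_wmul exchange_lcomb; apply: eq_bigr => q _.
by rewrite (linear_lcomb (rmulw q.1)); congr (_ *: _); apply: eq_bigr => p _; rewrite rmulw_cat.
Qed.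

Lemma lcomb_lbracket_wmul L1 L2 : all (fun p => 0 < size p.1)%N L1 ->
  lcomb lbracket (wmul L1 L2) = lcomb (rmulw^~ (lcomb lbracket L1)) L2.
Proof.
move=> /allP L1_gt0; rewrite lcomb_wmul exchange_lcomb; apply: eq_bigr => q _.
rewrite (linear_lcomb (rmulw q.1)); congr (_ *: _); rewrite /lcomb !big_seq.
by apply: eq_bigr => p /L1_gt0 p_gt0; rewrite lbracket_cat.
Qed.

End WordActions.
Arguments rmulw {K I}.
Arguments lbracket {K I}.

(** * Dynkin's lemma and completeness of the Lie identities *)

Fixpoint euler (K : Type) (t : term K) : term K :=
  match t with
  | Var x => Var x
  | Zero => Zero
  | Add a b => Add (euler a) (euler b)
  | Scal c a => Scal c (euler a)
  | Mul a b => Add (Mul (euler a) b) (Mul a (euler b))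
  end.

Section LieQuotient.
Variable K : fieldType.
Local Notation Lie := (@Lie_ids K).
Local Notation Q := (tquot Lie).
Local Notation tpi := (tpi Lie).

Lemma tqmulxx (x : Q) : tqmul x x = 0.
Proof.
elim/tquot_ind: x => a; rewrite -tpiM.
exact/eq_tpi/(@tc_ident K Lie (Mul x0 x0) (fun=> a))/or_introl.
Qed.

Lemma tqmul_anti (x y : Q) : tqmul x y = - tqmul y x.
Proof.
have := tqmulxx (x + y); rewrite tqmulDl !tqmulDr !tqmulxx add0r addr0.
by move/eqP; rewrite addr_eq0 => /eqP.
Qed.

Lemma tqmul_jacobi (x y z : Q) :
  tqmul (tqmul x y) z + (tqmul (tqmul y z) x + tqmul (tqmul z x) y) = 0.
Proof.
elim/tquot_ind: x => a; elim/tquot_ind: y => b; elim/tquot_ind: z => c.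
rewrite -!tpiM -!tpiD; apply: (@eq_tpi _ _ _ Zero).
pose s n := if n is 0 then a else if n is 1 then b else c.
exact: (@tc_ident K Lie _ s (or_intror erefl)).
Qed.

Lemma tqmul_leibniz (x y z : Q) :
  tqmul z (tqmul x y) = tqmul (tqmul z x) y - tqmul (tqmul z y) x.
Proof.
have := tqmul_jacobi z x y.
rewrite [tqmul (tqmul x y) z]tqmul_anti [tqmul y z]tqmul_anti tqmulNl addrA.
by move/eqP; rewrite subr_eq0 => /eqP <-; rewrite opprB addrC subrK.
Qed.

Lemma lcomb_rmulw_comm_expand (x : Q) (b : term K) :
  lcomb (rmulw^~ x) (comm_expand b) = tqmul x (tpi b).
Proof.
elim: b x => [i||a iha b ihb|c a iha|a iha b ihb] x /=.
- by rewrite /lcomb big_seq1 scale1r.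
- by rewrite /lcomb big_nil tqmul0r.
- by rewrite lcomb_cat iha ihb tpiD tqmulDr.
- by rewrite lcomb_wscale iha tpiZ tqmulZr.
- rewrite lcomb_cat lcomb_wscale !lcomb_rmulw_wmul iha ihb iha ihb tpiM.
  by rewrite tqmul_leibniz scaleN1r.
Qed.

Lemma dynkin (g : term K) : tpi (euler g) = lcomb (@lbracket K Lie) (comm_expand g).
Proof.
have expand_gt0 t : all (fun p => 0 < size p.1)%N (comm_expand t).
  by apply/allP => p /comm_expand_size /andP[].
elim: g => [i||a iha b ihb|c a iha|a iha b ihb] /=.
- by rewrite /lcomb big_seq1 scale1r.
- by rewrite /lcomb big_nil.
- by rewrite lcomb_cat tpiD iha ihb.
- by rewrite lcomb_wscale tpiZ iha.
- rewrite lcomb_cat lcomb_wscale !lcomb_lbracket_wmul ?expand_gt0 //.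
  rewrite !lcomb_rmulw_comm_expand -iha -ihb tpiD !tpiM scaleN1r.
  by rewrite [tqmul (tpi a) _]tqmul_anti.
Qed.

End LieQuotient.

Section EulerExpansion.
Variable K : fieldType.
Implicit Types (L : seq (word * K)) (w : word).

Definition wdeg L : seq (word * K) := [seq (p.1, (size p.1)%:R * p.2) | p <- L].

Lemma coef_wdeg L w : coef (wdeg L) w = (size w)%:R * coef L w.
Proof.
rewrite /coef big_map mulr_sumr; apply: eq_bigr => p _ /=.
by case: eqP => [->|_]; rewrite ?mul0r ?mulr0 // !mul1r.
Qed.

Lemma coef_wmul_wdeg L1 L2 w :
  coef (wmul (wdeg L1) L2) w + coef (wmul L1 (wdeg L2)) w =
  (size w)%:R * coef (wmul L1 L2) w.
Proof.
rewrite /coef /wmul /wdeg !big_allpairs_dep !big_map /= -big_split mulr_sumr.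
apply: eq_bigr => p _; rewrite big_map -big_split mulr_sumr; apply: eq_bigr => q _ /=.
case: eqP => [<-|_]; last by rewrite !mul0r addr0 mulr0.
by rewrite size_cat natrD; ring.
Qed.

Lemma coef_comm_expand_euler (g : term K) w :
  coef (comm_expand (euler g)) w = (size w)%:R * coef (comm_expand g) w.
Proof.
elim: g w => [i||a iha b ihb|c a iha|a iha b ihb] w /=.
- by rewrite /coef !big_seq1 /=; case: eqP => [<-|_] /=; ring.
- by rewrite /coef !big_nil mulr0.
- by rewrite !coef_cat iha ihb mulrDr.
- by rewrite !coef_wscale iha mulrCA.
have Ea : coef (comm_expand (euler a)) =1 coef (wdeg (comm_expand a)).
  by move=> v; rewrite iha coef_wdeg.
have Eb : coef (comm_expand (euler b)) =1 coef (wdeg (comm_expand b)).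
  by move=> v; rewrite ihb coef_wdeg.
rewrite !coef_cat !coef_wscale (eq_coef_wmull _ Ea) (eq_coef_wmulr _ Ea).
rewrite (eq_coef_wmull _ Eb) (eq_coef_wmulr _ Eb).
by rewrite mulrDr mulrCA -!coef_wmul_wdeg; ring.
Qed.

End EulerExpansion.

Section EulerQuotient.
Variable K : fieldType.
Local Notation Lie := (@Lie_ids K).
Local Notation Q := (tquot Lie).
Local Notation tpi := (tpi Lie).

Lemma euler_tcong (a b : term K) : tcong Lie a b -> tpi (euler a) = tpi (euler b).
Proof.
(* D maps an instance of the Jacobi identity to three interleaved instances. *)
have addr_regroup (V : zmodType) (A1 A2 A3 B1 B2 B3 C1 C2 C3 : V) :
    A1 + A2 + A3 + (B1 + B2 + B3 + (C1 + C2 + C3)) =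
    A1 + (B3 + C2) + (A2 + (B1 + C3)) + (A3 + (B2 + C1)).
  set x := [:: A1; A2; A3; B1; B2; B3; C1; C2; C3].
  have : \sum_(i <- [:: 0; 1; 2; 3; 4; 5; 6; 7; 8]%N) nth 0 x i =
         \sum_(i <- [:: 0; 5; 7; 1; 3; 8; 2; 4; 6]%N) nth 0 x i by apply: perm_big.
  by rewrite !big_cons big_nil /= !addr0 -!addrA.
elim=> {a b} /=.
- by [].
- by move=> a b _ ->.
- by move=> a b c _ -> _ ->.
- by move=> a a' b b' _ E1 _ E2; rewrite !tpiD E1 E2.
- by move=> k a a' _ E; rewrite !tpiZ E.
- by move=> a a' b b' H1 E1 H2 E2; rewrite !tpiD !tpiM E1 E2 (eq_tpi H1) (eq_tpi H2).
- by move=> a b c; rewrite !tpiD addrA.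
- by move=> a b; rewrite !tpiD addrC.
- by move=> a; rewrite !tpiD add0r.
- by move=> a; rewrite !tpiD tpiZ scaleN1r subrr.
- by move=> a; rewrite tpiZ scale1r.
- by move=> k l a; rewrite !tpiZ scalerA.
- by move=> k a b; rewrite !tpiZ !tpiD scalerDr !tpiZ.
- by move=> k l a; rewrite !tpiZ !tpiD !tpiZ scalerDl.
- by move=> a b c; rewrite !tpiD !tpiM !tpiD !tqmulDl addrACA.
- by move=> a b c; rewrite !tpiD !tpiM !tpiD !tqmulDr addrACA.
- by move=> k a b; rewrite !tpiD !tpiM !tpiZ !tpiD !tpiM !tqmulZl scalerDr.
- by move=> k a b; rewrite !tpiD !tpiM !tpiZ !tpiD !tpiM !tqmulZr scalerDr.
- move=> p s [->|->] /=.
  + by rewrite tpiD !tpiM [tqmul (tpi (s 0%N)) _]tqmul_anti subrr.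
  + rewrite !tpiD !tpiM !tpiD !tpiM !tqmulDl addr_regroup.
    by rewrite !tqmul_jacobi !addr0.
Qed.

Definition euler_quot (x : Q) : Q := tpi (euler (tqval x)).

Lemma euler_quot_tpi t : euler_quot (tpi t) = tpi (euler t).
Proof. exact/euler_tcong/tpiK. Qed.

Lemma euler_quot_is_linear : linear euler_quot.
Proof.
move=> k; elim/tquot_ind=> a; elim/tquot_ind=> b.
by rewrite -tpiZ -tpiD !euler_quot_tpi /= tpiD tpiZ.
Qed.
HB.instance Definition _ :=
  GRing.isLinear.Build K Q Q *:%R euler_quot euler_quot_is_linear.

End EulerQuotient.

Fixpoint hadd (K : Type) (s t : seq (term K)) : seq (term K) :=
  match s, t with
  | x :: s', y :: t' => Add x y :: hadd s' t'
  | [::], _ => t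
  | _, [::] => s
  end.

Fixpoint hmul (K : Type) (s t : seq (term K)) : seq (term K) :=
  if s is x :: s' then hadd [seq Mul x y | y <- t] (Zero :: hmul s' t) else [::].

(* The n-th entry of [hparts t] is the homogeneous component of degree n.+1. *)
Fixpoint hparts (K : Type) (t : term K) : seq (term K) :=
  match t with
  | Var x => [:: Var x]
  | Zero => [::]
  | Add a b => hadd (hparts a) (hparts b)
  | Scal c a => [seq Scal c y | y <- hparts a]
  | Mul a b => Zero :: hmul (hparts a) (hparts b)
  end.

Section HomogeneousParts.
Variables (K : fieldType) (I : term K -> Prop).
Local Notation tpi := (tpi I).
Local Notation tsum s := (\sum_(x <- s) tpi x).

Lemma tsum_hadd s t : tsum (hadd s t) = tsum s + tsum t.
Proof.
elim: s t => [|x s IH] [|y t] /=; rewrite ?big_nil ?add0r ?addr0 //.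
by rewrite !big_cons IH tpiD addrACA.
Qed.

Lemma tsum_hmul s t : tsum (hmul s t) = tqmul (tsum s) (tsum t).
Proof.
elim: s => [|x s IH] /=; first by rewrite !big_nil tqmul0l.
rewrite tsum_hadd [tsum (Zero :: _)]big_cons tpi0 add0r IH big_map.
rewrite [tsum (x :: s)]big_cons tqmulDl [tqmul (tpi x) _]tqmul_sumr.
by congr (_ + _); apply: eq_bigr => y _; rewrite tpiM.
Qed.

Lemma tpi_hparts t : tpi t = tsum (hparts t).
Proof.
elim: t => [x||a iha b ihb|c a iha|a iha b ihb] /=.
- by rewrite big_seq1.
- by rewrite big_nil.
- by rewrite tsum_hadd tpiD iha ihb.
- by rewrite big_map tpiZ iha scaler_sumr; apply: eq_bigr => y _; rewrite tpiZ.
- by rewrite big_cons tpi0 add0r tsum_hmul tpiM iha ihb.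
Qed.

End HomogeneousParts.

Section Graded.
Variable K : fieldType.
Local Notation tpi := (tpi (@Lie_ids K)).

Fixpoint graded (o : nat) (s : seq (term K)) : Prop :=
  if s is x :: s' then tpi (euler x) = o%:R *: tpi x /\ graded o.+1 s' else True.

Lemma graded_nth o s n : graded o s ->
  tpi (euler (nth Zero s n)) = (o + n)%:R *: tpi (nth Zero s n).
Proof.
elim: s o n => [|x s IH] o n /=; first by rewrite nth_nil tpi0 scaler0.
case=> Ex Es; case: n => [|n] /=; first by rewrite addn0.
by rewrite (IH _ _ Es) addSnnS.
Qed.

Lemma graded_hadd o s t : graded o s -> graded o t -> graded o (hadd s t).
Proof.
elim: s o t => [|x s IH] o [|y t] //= [Ex Es] [Ey Et]; split; last exact: IH.
by rewrite !tpiD Ex Ey scalerDr.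
Qed.

Lemma graded_cons0 o s : graded o.+1 s -> graded o (Zero :: s).
Proof. by split; first by rewrite tpi0 scaler0. Qed.

Lemma graded_mapMul o1 o2 x t : tpi (euler x) = o1%:R *: tpi x -> graded o2 t ->
  graded (o1 + o2) [seq Mul x y | y <- t].
Proof.
move=> Ex; elim: t o2 => [|y t IH] o2 //= [Ey Et]; split; last by rewrite -addnS; exact: IH.
by rewrite tpiD !tpiM Ex Ey tqmulZl tqmulZr natrD scalerDl.
Qed.

Lemma graded_hmul o1 o2 s t : graded o1 s -> graded o2 t -> graded (o1 + o2) (hmul s t).
Proof.
elim: s o1 => [|x s IH] o1 //= [Ex Es] Et; apply: graded_hadd; first exact: graded_mapMul.
by apply: graded_cons0; rewrite -addSn; exact: IH.
Qed.

Lemma graded_mapScal o c s : graded o s -> graded o [seq Scal c y | y <- s].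
Proof.
elim: s o => [|y s IH] o //= [Ey Es]; split; last exact: IH.
by rewrite !tpiZ Ey !scalerA mulrC.
Qed.

Lemma graded_hparts t : graded 1 (hparts t).
Proof.
elim: t => [x||a iha b ihb|c a iha|a iha b ihb] /=.
- by rewrite scale1r.
- by [].
- exact: graded_hadd.
- exact: graded_mapScal.
- exact/graded_cons0/(graded_hmul iha ihb).
Qed.

End Graded.

Lemma sum_eq0_of_power_sums (K : fieldType) (V : lmodType K) (d : nat) (X : nat -> V) :
  [pchar K] =i pred0 ->
  (forall j, \sum_(n < d) n.+1%:R ^+ j.+1 *: X n = 0) -> \sum_(n < d) X n = 0.
Proof.
move=> charK0 XJ.
(* p vanishes at 1, ..., d and p(0) <> 0; expanding each p(n + 1) in powers
   of n + 1 turns the sum of the p(n + 1) X n into p(0) times the sum of the X n. *)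
pose p : {poly K} := \prod_(n < d) ('X - n.+1%:R%:P).
have [m size_p] : exists m, size p = m.+1.
  by exists (size p).-1; rewrite prednK // size_poly_gt0 monic_neq0 ?monic_prod_XsubC.
have p0_neq0 : p`_0 != 0.
  rewrite -horner_coef0 horner_prod prodf_seq_neq0; apply/allP => n _.
  by rewrite hornerXsubC sub0r oppr_eq0; move/pcharf0P: charK0 => ->.
apply: (scalerI p0_neq0); transitivity (\sum_(n < d) p.[n.+1%:R] *: X n).
  under [RHS]eq_bigr do rewrite horner_coef size_p scaler_suml.
  rewrite exchange_big big_ord_recl /= [X in _ + X]big1 => [|i _].
    by rewrite addr0 scaler_sumr; apply: eq_bigr => n _; rewrite expr0 mulr1.
  rewrite -[RHS](scaler0 _ p`_(lift ord0 i)) -[X in _ = _ *: X](XJ i) scaler_sumr.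
  by apply: eq_bigr => n _; rewrite scalerA lift0.
rewrite scaler0; apply: big1 => n _.
by rewrite horner_prod (bigD1 n) //= hornerXsubC subrr mul0r scale0r.
Qed.

Lemma coef_comm_expand_iter_euler (K : fieldType) (f : term K) j w :
  coef (comm_expand (iter j (@euler K) f)) w = (size w)%:R ^+ j * coef (comm_expand f) w.
Proof.
elim: j => [|j IH] /=; first by rewrite expr0 mul1r.
by rewrite coef_comm_expand_euler IH exprS mulrA.
Qed.

Theorem lie_complete (K : fieldType) (f : term K) : [pchar K] =i pred0 ->
  (forall w, coef (comm_expand f) w = 0) -> tcong (@Lie_ids K) f Zero.
Proof.
move=> charK0 f0; set s := hparts f; pose X n := tpi (@Lie_ids K) (nth Zero s n).
have f_sum : tpi _ f = \sum_(n < size s) X n by rewrite tpi_hparts (big_nth Zero) big_mkord.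
have Df j : tpi _ (iter j (@euler K) f) = \sum_(n < size s) n.+1%:R ^+ j *: X n.
  elim: j => [|j IH]; first by rewrite f_sum; apply: eq_bigr => n _; rewrite scale1r.
  rewrite iterS -euler_quot_tpi IH linear_sum; apply: eq_bigr => n _.
  rewrite linearZ /= euler_quot_tpi (graded_nth _ (graded_hparts f)) add1n.
  by rewrite scalerA exprS mulrC.
apply/tpi_tcong; rewrite tpi0 f_sum; apply: (sum_eq0_of_power_sums charK0) => j.
rewrite -Df iterS dynkin; apply: lcomb_coef0 => w _.
by rewrite coef_comm_expand_iter_euler f0 mulr0.
Qed.

(** * A 31-dimensional algebra in the variety LS_A1 *)

(* Entry k lists the triples (i, j, c) such that c is the e_k-coordinate of
   e_i e_j, in an algebra with basis e_0, ..., e_30. *)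
Definition lsa_table : seq (seq (nat * nat * int)) := [::
  [:: ];
  [:: ];
  [:: ];
  [:: ];
  [:: ];
  [:: (1, 0, Posz 4)];
  [:: (3, 0, Posz 4)];
  [:: (1, 2, Posz 4)];
  [:: (2, 1, Posz 4)];
  [:: (4, 1, Posz 4)];
  [:: (3, 2, Posz 4)];
  [:: (4, 2, Posz 4)];
  [:: (3, 4, Posz 4)];
  [:: (4, 3, Posz 4)];
  [:: (0, 7, Negz 3); (2, 5, Negz 3); (5, 2, Posz 4); (8, 0, Negz 3)];
  [:: (2, 5, Negz 7); (7, 0, Posz 4); (8, 0, Negz 3)];
  [:: (0, 10, Negz 3); (2, 6, Posz 4); (6, 2, Posz 4); (10, 0, Negz 3)];
  [:: (4, 6, Negz 7); (12, 0, Posz 4); (13, 0, Negz 3)];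
  [:: (1, 10, Posz 4); (3, 7, Posz 4)];
  [:: (4, 7, Negz 7); (7, 4, Posz 4); (8, 4, Posz 4); (9, 2, Negz 7)];
  [:: (1, 11, Posz 4); (4, 7, Posz 4)];
  [:: (2, 12, Posz 4); (4, 10, Posz 4); (10, 4, Negz 3); (13, 2, Posz 4)];
  [:: (4, 10, Negz 7); (12, 2, Posz 4); (13, 2, Negz 3)];
  [:: (3, 11, Posz 4); (4, 10, Posz 4)];
  [:: (0, 18, Negz 7); (3, 14, Posz 8); (5, 10, Posz 8); (7, 6, Negz 7); (8, 6, Negz 7); (10, 5, Negz 7); (14, 3, Posz 4); (15, 3, Negz 3); (16, 1, Posz 8); (18, 0, Posz 8)];
  [:: (0, 20, Posz 8); (4, 14, Negz 7); (4, 15, Posz 8); (5, 11, Negz 7); (11, 5, Negz 7); (14, 4, Posz 4); (15, 4, Negz 3); (20, 0, Posz 8)];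
  [:: (0, 23, Posz 8); (4, 16, Negz 7); (6, 11, Negz 7); (11, 6, Negz 7); (16, 4, Posz 4); (23, 0, Posz 8)];
  [:: (0, 22, Negz 3); (0, 23, Negz 7); (2, 17, Posz 4); (6, 11, Posz 8); (11, 6, Posz 8); (17, 2, Posz 4); (22, 0, Negz 3); (23, 0, Negz 7)];
  [:: (1, 21, Posz 4); (1, 23, Posz 12); (3, 19, Negz 1); (3, 20, Posz 12); (4, 18, Posz 20); (7, 12, Posz 2); (8, 12, Negz 1); (9, 10, Posz 4); (13, 7, Posz 4); (18, 4, Negz 3)];
  [:: (1, 22, Posz 4); (4, 18, Negz 7); (12, 7, Posz 4); (13, 7, Negz 3)];
  [:: (0, 28, Posz 4); (0, 29, Posz 14); (1, 26, Negz 1); (1, 27, Negz 5); (3, 25, Posz 2); (4, 24, Posz 4); (5, 21, Negz 3); (5, 22, Negz 7); (5, 23, Negz 3); (6, 19, Posz 2); (6, 20, Negz 7); (7, 17, Negz 2); (8, 17, Posz 3); (9, 16, Negz 3); (12, 14, Negz 7); (12, 15, Posz 3); (13, 14, Posz 4); (13, 15, Negz 0); (14, 12, Posz 1); (14, 13, Posz 1); (15, 12, Negz 2); (15, 13, Negz 0); (16, 9, Posz 2); (17, 7, Negz 5); (19, 6, Posz 2); (20, 6, Negz 7); (21, 5, Negz 3); (22, 5, Negz 1); (23, 5, Negz 3); (24, 4, Posz 1); (25, 3, Negz 0); (26, 1, Negz 1); (28, 0, Posz 4); (29, 0, Posz 8)]].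

Definition lsa_struct (k : nat) : seq (nat * nat * int) := nth [::] lsa_table k.

Notation idx3 := (nat * nat * nat)%type.

(* [assocl_coefs k] (resp. [assocr_coefs k]) lists the ((i, j, l), c) with
   ((a b) c)_k (resp. (a (b c))_k) = sum of the c a_i b_j c_l. *)
Definition assocl_coefs (k : nat) : seq (idx3 * int) :=
  [seq ((s.1.1, s.1.2, t.1.2), t.2 * s.2) | t <- lsa_struct k, s <- lsa_struct t.1.1].

Definition assocr_coefs (k : nat) : seq (idx3 * int) :=
  [seq ((t.1.1, s.1.1, s.1.2), t.2 * s.2) | t <- lsa_struct k, s <- lsa_struct t.1.2].

Definition relabel (f : idx3 -> idx3) (c : int) (L : seq (idx3 * int)) :=
  [seq (f p.1, c * p.2) | p <- L].

Definition swap12 (x : idx3) : idx3 := (x.1.2, x.1.1, x.2).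

Definition left_symmetry_coefs (k : nat) : seq (idx3 * int) :=
  relabel id 1 (assocl_coefs k) ++ relabel id (-1) (assocr_coefs k) ++
  relabel swap12 (-1) (assocl_coefs k) ++ relabel swap12 1 (assocr_coefs k).

Definition a1_coefs (k : nat) : seq (idx3 * int) :=
  let L := assocl_coefs k in
  relabel id 1 L ++ relabel swap12 1 L ++
  relabel (fun x => (x.1.1, x.2, x.1.2)) 1 L ++ relabel (fun x => (x.1.2, x.2, x.1.1)) 1 L ++
  relabel (fun x => (x.2, x.1.1, x.1.2)) 1 L ++ relabel (fun x => (x.2, x.1.2, x.1.1)) 1 L.

Definition coef_fold (T : eqType) (L : seq (T * int)) (x : T) : int :=
  foldr (fun p c => (if p.1 == x then p.2 else 0) + c) 0 L.

Lemma coef_foldE (T : eqType) (L : seq (T * int)) x : coef_fold L x = coef L x.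
Proof.
elim: L => [|p L IH]; first by rewrite /coef big_nil.
by rewrite /coef big_cons -/(coef L x) /= -IH; case: eqP; rewrite ?mul1r ?mul0r.
Qed.

(* [coef_fold] evaluates far faster than [coef] under [vm_compute]. *)
Definition all_coef0 (T : eqType) (L : seq (T * int)) : bool :=
  all (fun x => coef_fold L x == 0) (map fst L).

Lemma lsa_table_checks :
  all (fun k => all_coef0 (left_symmetry_coefs k) && all_coef0 (a1_coefs k))
      (iota 0 (size lsa_table)).
Proof. by vm_compute. Qed.

Lemma lsa_struct_default k : (size lsa_table <= k)%N -> lsa_struct k = [::].
Proof. exact: nth_default. Qed.

Lemma lsa_struct_coefs0 k : all_coef0 (left_symmetry_coefs k) && all_coef0 (a1_coefs k).
Proof.
have [k_lt|k_ge] := ltnP k (size lsa_table).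
  by have /allP := lsa_table_checks; apply; rewrite mem_iota.
by rewrite /left_symmetry_coefs /a1_coefs /assocl_coefs /assocr_coefs lsa_struct_default.
Qed.

Section CoordinateSpace.
Variable K : fieldType.

Definition vec := nat -> K.

HB.instance Definition _ := boolp.gen_eqMixin vec.
HB.instance Definition _ := boolp.gen_choiceMixin vec.

Definition vadd (a b : vec) : vec := fun n => a n + b n.
Definition vopp (a : vec) : vec := fun n => - a n.
Definition vscale (c : K) (a : vec) : vec := fun n => c * a n.

Lemma vaddA : associative vadd.
Proof. by move=> a b c; apply: functional_extensionality => n; apply: addrA. Qed.
Lemma vaddC : commutative vadd.
Proof. by move=> a b; apply: functional_extensionality => n; apply: addrC. Qed.
Lemma vadd0 : left_id (fun=> 0) vadd.
Proof. by move=> a; apply: functional_extensionality => n; apply: add0r. Qed.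
Lemma vaddN : left_inverse (fun=> 0) vopp vadd.
Proof. by move=> a; apply: functional_extensionality => n; apply: addNr. Qed.
HB.instance Definition _ := GRing.isZmodule.Build vec vaddA vaddC vadd0 vaddN.

Lemma vscaleA c d a : vscale c (vscale d a) = vscale (c * d) a.
Proof. by apply: functional_extensionality => n; apply: mulrA. Qed.
Lemma vscale1 : left_id 1 vscale.
Proof. by move=> a; apply: functional_extensionality => n; apply: mul1r. Qed.
Lemma vscaleDr : right_distributive vscale +%R.
Proof. by move=> c a b; apply: functional_extensionality => n; apply: mulrDr. Qed.
Lemma vscaleDl a : {morph vscale^~ a : c d / c + d}.
Proof. by move=> c d; apply: functional_extensionality => n; apply: mulrDl. Qed.
HB.instance Definition _ :=
  GRing.Zmodule_isLmodule.Build K vec vscaleA vscale1 vscaleDr vscaleDl.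

Lemma vecD (a b : vec) n : (a + b) n = a n + b n. Proof. by []. Qed.
Lemma vecZ c (a : vec) n : (c *: a) n = c * a n. Proof. by []. Qed.
Lemma vecN (a : vec) n : (- a) n = - a n. Proof. by []. Qed.
Lemma vec0 n : (0 : vec) n = 0. Proof. by []. Qed.

Lemma vec_sum (J : Type) (r : seq J) (F : J -> vec) n :
  (\sum_(j <- r) F j) n = \sum_(j <- r) F j n.
Proof. by elim: r => [|j r IH]; rewrite ?big_nil // !big_cons vecD IH. Qed.

End CoordinateSpace.

Section LSAModel.
Variable K : fieldType.
Local Notation vec := (vec K).

Definition vmul (a b : vec) : vec :=
  fun k => \sum_(t <- lsa_struct k) t.2%:~R * (a t.1.1 * b t.1.2).

Lemma vmul_is_linear a : linear (vmul a).
Proof.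
move=> c b b'; apply: functional_extensionality => k.
rewrite /vmul vecD vecZ mulr_sumr -big_split.
by apply: eq_bigr => t _ /=; rewrite vecD vecZ; ring.
Qed.
HB.instance Definition _ a :=
  GRing.isLinear.Build K vec vec *:%R (vmul a) (vmul_is_linear a).

Lemma vmulDl a b c : vmul (a + b) c = vmul a c + vmul b c.
Proof.
apply: functional_extensionality => k.
by rewrite /vmul vecD -big_split; apply: eq_bigr => t _ /=; rewrite vecD; ring.
Qed.

Lemma vmulZl d a b : vmul (d *: a) b = d *: vmul a b.
Proof.
apply: functional_extensionality => k.
by rewrite /vmul vecZ mulr_sumr; apply: eq_bigr => t _; rewrite vecZ; ring.
Qed.

Lemma vmul0l b : vmul 0 b = 0.
Proof. by rewrite -(scale0r 0) vmulZl !scale0r. Qed.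

Definition tri_eval (L : seq (idx3 * int)) (F : idx3 -> K^o) : K :=
  lcomb F [seq (p.1, p.2%:~R) | p <- L].

Lemma tri_eval_cat L1 L2 F : tri_eval (L1 ++ L2) F = tri_eval L1 F + tri_eval L2 F.
Proof. by rewrite /tri_eval map_cat lcomb_cat. Qed.

Lemma tri_eval_relabel f c L F :
  tri_eval (relabel f c L) F = c%:~R * tri_eval L (F \o f).
Proof.
rewrite /tri_eval /lcomb !big_map mulr_sumr; apply: eq_bigr => p _.
by rewrite /= -[_ *: _]/(_ * _) -[_ *: (F _)]/(_ * _) intrM mulrA.
Qed.

Lemma tri_eval0 L F : all_coef0 L -> tri_eval L F = 0.
Proof.
move=> /allP L0; rewrite /tri_eval; apply: (lcomb_coef0 (V := K^o)) => x; rewrite -map_comp => /L0 /eqP.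
by rewrite coef_rmorph coef_foldE => ->.
Qed.

Lemma vmul_assocl a b c k :
  vmul (vmul a b) c k = tri_eval (assocl_coefs k) (fun x => a x.1.1 * b x.1.2 * c x.2).
Proof.
rewrite /vmul /tri_eval /lcomb /assocl_coefs map_allpairs big_allpairs_dep.
apply: eq_bigr => t _; rewrite mulr_suml mulr_sumr.
by apply: eq_bigr => s _; rewrite -[_ *: _]/(_ * _) /= intrM; ring.
Qed.

Lemma vmul_assocr a b c k :
  vmul a (vmul b c) k = tri_eval (assocr_coefs k) (fun x => a x.1.1 * b x.1.2 * c x.2).
Proof.
rewrite /vmul /tri_eval /lcomb /assocr_coefs map_allpairs big_allpairs_dep.
apply: eq_bigr => t _; rewrite !mulr_sumr.
by apply: eq_bigr => s _; rewrite -[_ *: _]/(_ * _) /= intrM; ring.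
Qed.

Definition vassoc a b c := vmul (vmul a b) c - vmul a (vmul b c).

Lemma vassoc_left_symmetric a b c : vassoc a b c = vassoc b a c.
Proof.
apply: functional_extensionality => k; apply/eqP; rewrite -subr_eq0; apply/eqP.
pose F x := a x.1.1 * b x.1.2 * c x.2.
have /andP[LS _] := lsa_struct_coefs0 k.
have := tri_eval0 F LS.
rewrite !tri_eval_cat !tri_eval_relabel => <-.
rewrite /vassoc !vecD !vecN !vmul_assocl !vmul_assocr -/F.
have -> : (fun x => b x.1.1 * a x.1.2 * c x.2) = F \o swap12.
  by apply: functional_extensionality => x; rewrite /F /=; ring.
by rewrite -[F \o id]/F; ring.
Qed.

Lemma vmul_a1_identity a b c :
  vmul (vmul a b) c + (vmul (vmul b a) c + (vmul (vmul a c) b +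
  (vmul (vmul c a) b + (vmul (vmul b c) a + vmul (vmul c b) a)))) = 0.
Proof.
apply: functional_extensionality => k; rewrite vec0.
pose F x := a x.1.1 * b x.1.2 * c x.2.
have /andP[_ A1] := lsa_struct_coefs0 k.
have := tri_eval0 F A1.
rewrite /a1_coefs !tri_eval_cat !tri_eval_relabel !mul1r => <-.
rewrite !vecD !vmul_assocl /tri_eval /lcomb !big_map.
by congr (_ + (_ + (_ + (_ + (_ + _))))); apply: eq_bigr => p _; apply: congr1; rewrite /F /=; ring.
Qed.

Fixpoint lsa_eval (v : nat -> vec) (t : term K) : vec :=
  match t with
  | Var n => v n
  | Zero => 0
  | Add a b => lsa_eval v a + lsa_eval v b
  | Scal c a => c *: lsa_eval v a
  | Mul a b => vmul (lsa_eval v a) (lsa_eval v b)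
  end.

Lemma lsa_eval_subst v s p : lsa_eval v (subst s p) = lsa_eval (lsa_eval v \o s) p.
Proof. by elim: p => //= [a -> b ->|c a ->|a -> b ->]. Qed.

Lemma lsa_eval_tcong a b : tcong (@LS_A1_ids K) a b -> forall v, lsa_eval v a = lsa_eval v b.
Proof.
elim=> {a b} /=.
- by [].
- by move=> a b _ E v; rewrite E.
- by move=> a b c _ E1 _ E2 v; rewrite E1 E2.
- by move=> a a' b b' _ E1 _ E2 v; rewrite E1 E2.
- by move=> k a a' _ E v; rewrite E.
- by move=> a a' b b' _ E1 _ E2 v; rewrite E1 E2.
- by move=> a b c v; rewrite addrA.
- by move=> a b v; rewrite addrC.
- by move=> a v; rewrite add0r.
- by move=> a v; rewrite scaleN1r subrr.
- by move=> a v; rewrite scale1r.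
- by move=> k l a v; rewrite scalerA.
- by move=> k a b v; rewrite scalerDr.
- by move=> k l a v; rewrite scalerDl.
- by move=> a b c v; rewrite vmulDl.
- by move=> a b c v; rewrite linearD.
- by move=> k a b v; rewrite vmulZl.
- by move=> k a b v; rewrite linearZ.
- move=> p s [->|->] v; rewrite lsa_eval_subst /=.
  + by rewrite !scaleN1r -/(vassoc _ _ _) -/(vassoc _ _ _) vassoc_left_symmetric subrr.
  + exact: vmul_a1_identity.
Qed.

End LSAModel.
Arguments vmul {K}.

(** * Reading off the commutator expansion *)

(* m_j := e_(mchain j); the check says e_q m_j = 4 m_(j-1) if j = q + 1 and
   e_q m_j = 0 otherwise, for q < 4 and j <= 4. *)
Definition mchain (j : nat) : nat := nth 0%N [:: 30; 28; 21; 12; 4]%N j.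

Lemma mchain_check : all (fun q => all (fun j => all (fun k =>
    coef_fold (lsa_struct k) (q, mchain j) ==
    (if (q.+1 == j) && (k == mchain j.-1) then 4 else 0))
  (iota 0 (size lsa_table))) (iota 0 5)) (iota 0 4).
Proof. by vm_compute. Qed.

Section Detection.
Variable K : fieldType.
Local Notation vec := (vec K).

Definition evec (i : nat) : vec := fun n => (n == i)%:R.

Lemma vmul_evec a b k : vmul (evec a) (evec b) k = (coef (lsa_struct k) (a, b))%:~R.
Proof.
rewrite /vmul /coef rmorph_sum; apply: eq_bigr => -[[i j] c] _ /=.
rewrite rmorphM rmorph_nat /evec xpair_eqE.
by case: (i == a); case: (j == b); rewrite /= ?mulr1 ?mulr0 ?mul1r ?mul0r.
Qed.

Lemma vmul_evec_mchain q j : (q < 4)%N -> (j < 5)%N ->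
  vmul (evec q) (evec (mchain j)) = if q.+1 == j then 4 *: evec (mchain j.-1) else 0.
Proof.
move=> q_lt j_lt; apply: functional_extensionality => k; rewrite vmul_evec -coef_foldE.
have [k_lt|k_ge] := ltnP k (size lsa_table).
  have /allP/(_ q) := mchain_check; rewrite mem_iota => /(_ q_lt).
  move=> /allP/(_ j); rewrite mem_iota => /(_ j_lt).
  move=> /allP/(_ k); rewrite mem_iota => /(_ k_lt) /eqP ->.
  by case: (q.+1 == j); rewrite ?vecZ /evec; case: (k == _); rewrite ?mulr1 ?mulr0.
rewrite /coef_fold lsa_struct_default //=; case: (q.+1 == j) => //.
have mchain_lt : (mchain j.-1 < size lsa_table)%N.
  by rewrite /mchain; case: j.-1 => [|[|[|[|[|m]]]]]; rewrite /= ?nth_nil.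
by rewrite vecZ /evec (gtn_eqF (leq_trans mchain_lt k_ge)) mulr0.
Qed.

Lemma evec_mchain0 i : (i <= 4)%N -> evec (mchain i) (mchain 0) = (i == 0%N)%:R.
Proof. by case: i => [|[|[|[|[|]]]]]. Qed.

Definition word_subst (u : word) (x : nat) : vec := \sum_(q < size u | nth 0%N u q == x) evec q.

Lemma vmul_word_subst u x j : (size u <= 4)%N -> (j <= size u)%N ->
  vmul (word_subst u x) (evec (mchain j)) =
  if (0 < j)%N && (nth 0%N u j.-1 == x) then 4 *: evec (mchain j.-1) else 0.
Proof.
move=> u4 j_le; rewrite /word_subst (big_morph (vmul^~ _) (fun a b => vmulDl a b _) (vmul0l _)).
have q4 (q : 'I_(size u)) : (q < 4)%N by apply: leq_trans (ltn_ord q) u4.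
have j5 : (j < 5)%N by apply: leq_ltn_trans j_le _.
under eq_bigr => q _ do rewrite (vmul_evec_mchain (q4 q) j5).
case: j j_le j5 => [|j] j_lt _ /=.
  by rewrite big1.
rewrite big_mkcond (bigD1 (Ordinal j_lt)) //= eqxx big1 => [|q /negbTE q_ne]; last first.
  by rewrite eqSS (_ : (q == j :> nat) = false) ?if_same.
by rewrite addr0 eq_sym; case: eqP.
Qed.

Definition lmulw (v : nat -> vec) (w : word) (x : vec) : vec :=
  foldr (fun i y => vmul (v i) y) x w.

Lemma lmulw_is_linear v w : linear (lmulw v w).
Proof. by move=> c x y; elim: w => [|i w IH] //=; rewrite IH linearP. Qed.
HB.instance Definition _ v w :=
  GRing.isLinear.Build K vec vec *:%R (lmulw v w) (lmulw_is_linear v w).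

Lemma lmulw_cat v u w x : lmulw v (u ++ w) x = lmulw v u (lmulw v w x).
Proof. by rewrite /lmulw foldr_cat. Qed.

Lemma vmul_commutator (a b x : vec) :
  vmul (vmul a b) x - vmul (vmul b a) x = vmul a (vmul b x) - vmul b (vmul a x).
Proof.
move: (vassoc_left_symmetric a b x); rewrite /vassoc.
set A := vmul (vmul a b) x; set B := vmul a (vmul b x).
set C := vmul (vmul b a) x; set D := vmul b (vmul a x).
by move=> E; rewrite -[A](subrK B) E addrAC [C - D]addrC addrK addrC.
Qed.

Lemma vmul_comm_eval (v : nat -> vec) (g : term K) (x : vec) :
  vmul (lsa_eval v (evalC Var g)) x = lcomb (fun w => lmulw v w x) (comm_expand g).
Proof.
elim: g x => [i||a iha b ihb|c a iha|a iha b ihb] x /=.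
- by rewrite /lcomb big_seq1 scale1r.
- by rewrite vmul0l /lcomb big_nil.
- by rewrite vmulDl iha ihb lcomb_cat.
- by rewrite vmulZl iha lcomb_wscale.
set A := lsa_eval v (evalC Var a); set B := lsa_eval v (evalC Var b).
rewrite vmulDl vmulZl !scaleN1r vmul_commutator lcomb_cat lcomb_wscale scaleN1r.
rewrite [vmul B x]ihb [vmul A x]iha (linear_lcomb (vmul A)) (linear_lcomb (vmul B)).
congr (_ - _); rewrite lcomb_wmul exchange_lcomb; apply: eq_bigr => p _;
  congr (_ *: _); rewrite /comp /=.
  by apply: etrans (iha _) _; apply: eq_bigr => q _; rewrite lmulw_cat.
by apply: etrans (ihb _) _; apply: eq_bigr => q _; rewrite lmulw_cat.
Qed.

Lemma lmulw_word_subst u w : (size u <= 4)%N ->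
  lmulw (word_subst u) w (evec (mchain (size u))) =
  (((size w <= size u)%N && (w == drop (size u - size w) u))%:R * 4 ^+ size w)
    *: evec (mchain (size u - size w)).
Proof.
move=> u4; elim: w => [|x w IH] /=.
  by rewrite subn0 drop_size eqxx expr0 mulr1 scale1r.
rewrite IH linearZ /= vmul_word_subst ?leq_subr //.
have [w_le|w_gt] := leqP (size w) (size u); last first.
  have -> : (size w < size u)%N = false by rewrite ltnNge ltnW.
  by rewrite /= !mul0r !scale0r.
have [w_eq|j_gt0] := posnP (size u - size w)%N.
  have -> : (size w < size u)%N = false by rewrite ltnNge -subn_eq0 w_eq.
  by rewrite w_eq /= !mul0r scaler0 scale0r.
have j_lt : ((size u - size w).-1 < size u)%N by rewrite prednK // leq_subr.
rewrite (_ : (size u - (size w).+1)%N = (size u - size w).-1) ?subnS //.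
rewrite (drop_nth 0%N j_lt) prednK // eqseq_cons [x == _]eq_sym -subn_gt0 j_gt0 /=.
case: (_ == x); case: (w == _); rewrite /= ?mul0r ?mulr0 ?scale0r ?scaler0 //.
by rewrite scalerA exprS !mul1r mulrC.
Qed.

Lemma lmulw_word_subst_mchain0 u w : (size u <= 4)%N ->
  lmulw (word_subst u) w (evec (mchain (size u))) (mchain 0) = (w == u)%:R * 4 ^+ size u.
Proof.
move=> u4; rewrite lmulw_word_subst // vecZ evec_mchain0; last exact: leq_trans (leq_subr _ _) u4.
have [->|w_ne] := eqVneq w u; first by rewrite leqnn subnn drop0 eqxx !mulr1.
rewrite mul0r; case: andP => [[w_le /eqP w_drop]|_]; last by rewrite !mul0r.
case: eqP => [u_w|_]; last by rewrite mulr0.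
by move: w_ne; rewrite w_drop u_w drop0 eqxx.
Qed.

Lemma comm_identity_coef (f : term K) : [pchar K] =i pred0 -> (tdeg f <= 4)%N ->
  comm_identity_LS_A1 f -> forall u, coef (comm_expand f) u = 0.
Proof.
move=> charK0 f4 f_id u.
have [u_gt|u4] := ltnP 4 (size u).
  rewrite /coef big_seq big1 // => p /comm_expand_size /andP[_ p_le].
  have /negPf-> : p.1 != u by apply: contraTneq p_le => ->; rewrite -ltnNge (leq_trans _ u_gt).
  by rewrite mul0r.
have pow4_neq0 : (4 : K) ^+ size u != 0.
  by rewrite expf_neq0 //; move/pcharf0P: charK0 => ->.
apply/eqP; rewrite -(mulIr_eq0 _ (mulIf pow4_neq0)); apply/eqP.
have := congr1 (fun a => vmul a (evec (mchain (size u))) (mchain 0))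
  (lsa_eval_tcong (f_id Var) (word_subst u)).
rewrite /= vmul0l vec0 vmul_comm_eval /lcomb vec_sum => <-.
rewrite /coef mulr_suml; apply: eq_bigr => p _.
by rewrite vecZ lmulw_word_subst_mchain0 // mulrCA mulrA.
Qed.

End Detection.

Theorem mainTheorem6 (K : fieldType) (charK0 : [pchar K] =i pred0)
  (f : term K) (degf : (tdeg f <= 4)%N) :
  comm_identity_LS_A1 f -> tcong (@Lie_ids K) f Zero.
Proof. by move=> f_id; apply: lie_complete => //; apply: comm_identity_coef. Qed.
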